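(* Let $I$ be an infinite index set, $U$ an ultrafilter on $I$, $(R_i)_{i\in I}$ a sequence of rings with ultraproduct $R_U$, and for each $i$ let $A_i,B_i$ be $R_i$-modules such that the sequences $(A_i)$ and $(B_i)$ are uniformly finitely generated. Then the natural map $F:A_U\otimes_{R_U}B_U\to\mathrm{ulim}(A_i\otimes_{R_i}B_i)$, determined by $\mathrm{ulim}\,a_i\otimes\mathrm{ulim}\,b_i\mapsto\mathrm{ulim}(a_i\otimes b_i)$, is an isomorphism.
   Context: $A_U=\prod_i A_i/U$ denotes the ultraproduct, an $R_U$-module; $\mathrm{ulim}(A_i\otimes B_i)$ is the ultraproduct of the tensor products. A sequence $(M_i)$ of $R_i$-modules is uniformly finitely generated if there is $m\in\mathbb{N}$ such that every $M_i$ is generated by $m$ elements. *)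

From HB Require Import structures.
From mathcomp Require Import all_boot all_algebra generic_quotient.
From mathcomp Require Import boolp classical_sets cardinality filter.
Set Implicit Arguments.
Unset Strict Implicit.
Unset Printing Implicit Defensive.
Import GRing.Theory.
Local Open Scope ring_scope.
Local Open Scope quotient_scope.
Local Open Scope classical_set_scope.

Section UEquiv.
Context {I : Type} (F : set_system I) {FF : Filter F}.
Variable M : I -> choiceType.

Definition ueq (x y : forall i, M i) : bool := `[< F [set i | x i = y i] >].

Lemma ueqP x y : reflect (F [set i | x i = y i]) (ueq x y).
Proof. exact: asboolP. Qed.

Lemma ueq_is_equiv : equiv_class_of ueq.
Proof.
split=> [x|x y|y x z].
- by apply/ueqP; apply: filterS filterT => i.
- by apply/idP/idP => /ueqP H; apply/ueqP; apply: filterS H => i.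
- move=> /ueqP Hyx /ueqP Hxz; apply/ueqP.
  by apply: filterS (filterI Hyx Hxz) => i [H1 H2]; congruence.
Qed.

Canonical ueq_equiv := EquivRelPack ueq_is_equiv.
Canonical ueq_encModRel := defaultEncModRel ueq.

Definition uquot := {eq_quot ueq}.
HB.instance Definition _ : EqQuotient _ ueq uquot := EqQuotient.on uquot.
Lemma uquotE (x y : forall i, M i) :
  (\pi_uquot x = \pi_uquot y) <-> F [set i | x i = y i].
Proof.
split => [H | H].
  by apply/ueqP; apply/(@eqquotP _ _ uquot); exact: H.
by apply/(@eqquotP _ _ uquot); apply/ueqP.
Qed.

Lemma repr_uquot (x : forall i, M i) : F [set i | repr (\pi_uquot x) i = x i].
Proof. by apply/uquotE; rewrite reprK. Qed.

End UEquiv.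
Arguments ueq {I} F {M} x y.
Arguments uquot {I} F {FF} M.

Section UZmod.
Context {I : Type} (F : set_system I) {FF : Filter F}.
Variable M : I -> zmodType.

Definition uprod := uquot F M.
HB.instance Definition _ := Choice.on uprod.

Local Notation pi := (\pi_(uquot F M)).

Definition uzero : uprod := pi (fun i => 0).
Fact uadd_key : unit. Proof. by []. Qed.
Definition uadd := locked_with uadd_key (fun (x y : uprod) => pi (fun i => repr x i + repr y i)).
Fact uopp_key : unit. Proof. by []. Qed.
Definition uopp := locked_with uopp_key (fun (x : uprod) => pi (fun i => - repr x i)).

Lemma uadd_pi x y : uadd (pi x) (pi y) = pi (fun i => x i + y i).
Proof.
rewrite [uadd]unlock /=; apply/uquotE; apply: filterS (filterI (repr_uquot x) (repr_uquot y)).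
by move=> i [H1 H2] /=; exact: (congr2 _ H1 H2).
Qed.

Lemma uopp_pi x : uopp (pi x) = pi (fun i => - x i).
Proof. by rewrite [uopp]unlock /=; apply/uquotE; apply: filterS (repr_uquot x) => i H /=; exact: (congr1 _ H). Qed.

Lemma uaddA : associative uadd.
Proof.
move=> x y z; elim/quotW: x => x; elim/quotW: y => y; elim/quotW: z => z; rewrite !uadd_pi.
by congr pi; apply: functional_extensionality_dep => i; rewrite addrA.
Qed.

Lemma uaddC : commutative uadd.
Proof.
move=> x y; elim/quotW: x => x; elim/quotW: y => y; rewrite !uadd_pi.
by congr pi; apply: functional_extensionality_dep => i; rewrite addrC.
Qed.

Lemma uadd0 : left_id uzero uadd.
Proof.
move=> x; elim/quotW: x => x; rewrite /uzero uadd_pi.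
by congr pi; apply: functional_extensionality_dep => i; rewrite add0r.
Qed.

Lemma uaddN : left_inverse uzero uopp uadd.
Proof.
move=> x; elim/quotW: x => x; rewrite uopp_pi uadd_pi.
by congr pi; apply: functional_extensionality_dep => i; rewrite addNr.
Qed.

HB.instance Definition _ := GRing.isZmodule.Build uprod uaddA uaddC uadd0 uaddN.

End UZmod.
Arguments uprod {I} F {FF} M.

Section URing.
Context {I : Type} (F : set_system I) {FF : Filter F}.
Variable R : I -> comPzRingType.

Definition uring := uprod F (fun i => R i).
HB.instance Definition _ := GRing.Zmodule.on uring.

Local Notation pi := (\pi_(uquot F (fun i => R i))).

Definition uone : uring := pi (fun i => 1).
Fact umul_key : unit. Proof. by []. Qed.
Definition umul := locked_with umul_key (fun (x y : uring) => pi (fun i => repr x i * repr y i)).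

Lemma umul_pi x y : umul (pi x) (pi y) = pi (fun i => x i * y i).
Proof.
rewrite [umul]unlock /=; apply/uquotE; apply: filterS (filterI (repr_uquot x) (repr_uquot y)).
by move=> i [H1 H2] /=; exact: (congr2 _ H1 H2).
Qed.

Lemma umulA : associative umul.
Proof.
move=> x y z; elim/quotW: x => x; elim/quotW: y => y; elim/quotW: z => z; rewrite !umul_pi.
by congr pi; apply: functional_extensionality_dep => i; rewrite mulrA.
Qed.

Lemma umulC : commutative umul.
Proof.
move=> x y; elim/quotW: x => x; elim/quotW: y => y; rewrite !umul_pi.
by congr pi; apply: functional_extensionality_dep => i; rewrite mulrC.
Qed.

Lemma umul1 : left_id uone umul.
Proof.
move=> x; elim/quotW: x => x; rewrite /uone umul_pi.
by congr pi; apply: functional_extensionality_dep => i; rewrite mul1r.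
Qed.

Lemma umulDl : left_distributive umul +%R.
Proof.
move=> x y z; elim/quotW: x => x; elim/quotW: y => y; elim/quotW: z => z. 
rewrite [_ + _]uadd_pi !umul_pi [_ + _]uadd_pi.
by congr pi; apply: functional_extensionality_dep => i; rewrite mulrDl.
Qed.

HB.instance Definition _ :=
  GRing.Zmodule_isComPzRing.Build uring umulA umulC umul1 umulDl.

End URing.
Arguments uring {I} F {FF} R.

Section UMod.
Context {I : Type} (F : set_system I) {FF : Filter F}.
Variable R : I -> comPzRingType.
Variable M : forall i, lmodType (R i).

Definition umod := uprod F (fun i => M i).
HB.instance Definition _ := GRing.Zmodule.on umod.

Local Notation pi := (\pi_(uquot F (fun i => M i))).
Local Notation piR := (\pi_(uquot F (fun i => R i))).

Fact uscale_key : unit. Proof. by []. Qed.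
Definition uscale := locked_with uscale_key (fun (r : uring F R) (x : umod) => (pi (fun i => repr r i *: repr x i) : umod)).

Lemma uscale_pi r x : uscale (piR r) (pi x) = pi (fun i => r i *: x i).
Proof.
rewrite [uscale]unlock /=; apply/uquotE; apply: filterS (filterI (repr_uquot r) (repr_uquot x)).
by move=> i [H1 H2] /=; exact: (congr2 _ H1 H2).
Qed.

Lemma uscaleA a b v : uscale a (uscale b v) = uscale (a * b) v.
Proof.
elim/quotW: a => a; elim/quotW: b => b; elim/quotW: v => v; rewrite !uscale_pi [_ * _]umul_pi uscale_pi.
by congr pi; apply: functional_extensionality_dep => i; rewrite scalerA.
Qed.

Lemma uscale1 : left_id 1 uscale.
Proof.
move=> v; elim/quotW: v => v; rewrite [1 : uring F R]/(@uone _ F _ R) /uone uscale_pi.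
by congr pi; apply: functional_extensionality_dep => i; rewrite scale1r.
Qed.

Lemma uscaleDr : right_distributive uscale +%R.
Proof.
move=> a u v; elim/quotW: a => a; elim/quotW: u => u; elim/quotW: v => v; rewrite [_ + _]uadd_pi !uscale_pi.
by rewrite [_ + _]uadd_pi; congr pi; apply: functional_extensionality_dep => i; rewrite scalerDr.
Qed.

Lemma uscaleDl (v : umod) (a b : uring F R) : uscale (a + b) v = uscale a v + uscale b v.
Proof.
elim/(@quotW _ (uquot F (fun i => R i))): a => a;
elim/(@quotW _ (uquot F (fun i => R i))): b => b; elim/quotW: v => v; rewrite [_ + _]uadd_pi !uscale_pi.
by rewrite [_ + _]uadd_pi; congr pi; apply: functional_extensionality_dep => i; rewrite scalerDl.
Qed.

HB.instance Definition _ :=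
  GRing.Zmodule_isLmodule.Build (uring F R) umod uscaleA uscale1 uscaleDr uscaleDl.

Definition ulim (x : forall i, M i) : umod := pi x.

End UMod.
Arguments umod {I} F {FF} {R} M.
Arguments ulim {I} F {FF} {R} {M} x.

(* Tensor products over a commutative ring, via the universal property.     *)
Section Tensor.
Variable R : comPzRingType.

Definition lin_map (V W : lmodType R) (g : V -> W) : Prop :=
  forall (r : R) (x y : V), g (r *: x + y) = r *: g x + g y.

Definition bilinear_map (A B C : lmodType R) (f : A -> B -> C) : Prop :=
  (forall b, lin_map (fun a => f a b)) /\ (forall a, lin_map (f a)).

Definition is_tensor_product (A B T : lmodType R) (tens : A -> B -> T) : Prop :=
  bilinear_map tens /\
  forall (C : lmodType R) (f : A -> B -> C), bilinear_map f ->
    exists! g : T -> C, lin_map g /\ forall a b, g (tens a b) = f a b.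

End Tensor.

Definition unif_fin_gen {I : Type} (R : I -> comPzRingType)
  (M : forall i, lmodType (R i)) : Prop :=
  exists m : nat, forall i, exists g : 'I_m -> M i,
    forall x : M i, exists c : 'I_m -> R i, x = \sum_(j < m) c j *: g j.

(* Fix generators [g_1 .. g_m] of the [A_i] and [h_1 .. h_n] of the [B_i],
   uniformly in [i].  Every element of [A_i (x) B_i] has the form
   [sum_j g_j (x) b_j], which gives surjectivity coordinatewise.  Such a sum
   vanishes iff there are scalars [kap_kj] with [sum_j kap_kj g_j = 0] for all
   [k] and [b_j = sum_k kap_kj h_k] for all [j] (the equational criterion for
   vanishing tensors).  As [m] and [n] do not depend on [i], this finite amount
   of data passes to the ultraproduct through [ulim], where it makes the
   corresponding tensor of [A_U (x) B_U] vanish; hence injectivity. *)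

From HB Require Import structures.
From mathcomp Require Import all_boot all_algebra generic_quotient.
From mathcomp Require Import boolp classical_sets cardinality filter.
Import GRing.Theory.
Local Open Scope ring_scope.
Local Open Scope quotient_scope.
Local Open Scope classical_set_scope.

Section LinMap.
Context {R : comPzRingType} {V W : lmodType R} {f : V -> W} (f_lin : lin_map f).

Definition lin_map_linear : {linear V -> W} :=
  HB.pack f (GRing.isLinear.Build R V W *:%R f f_lin).

Lemma lin_map0 : f 0 = 0. Proof. exact: (linear0 lin_map_linear). Qed.
Lemma lin_mapD x y : f (x + y) = f x + f y.
Proof. exact: (linearD lin_map_linear). Qed.
Lemma lin_mapB x y : f (x - y) = f x - f y.
Proof. exact: (linearB lin_map_linear). Qed.
Lemma lin_mapZ r x : f (r *: x) = r *: f x.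
Proof. exact: (linearZZ lin_map_linear). Qed.
Lemma lin_map_sum (J : Type) (s : seq J) (P : pred J) (F : J -> V) :
  f (\sum_(j <- s | P j) F j) = \sum_(j <- s | P j) f (F j).
Proof. exact: (linear_sum lin_map_linear). Qed.

Lemma lin_map_inj : (forall x, f x = 0 -> x = 0) -> injective f.
Proof. by move=> f0 x y fxy; apply/subr0_eq/f0; rewrite lin_mapB fxy subrr. Qed.

End LinMap.

Section QuotientModule.
Context {R : comPzRingType} {V : lmodType R} (S : zmodClosed V).
Hypothesis S_scale : GRing.scaler_closed S.

(* The unused argument puts the closure proof into the type, so that the
   lmodType instance below is found by unification. *)
Definition quot_lmod of GRing.scaler_closed S := Quotient.quot S.
Local Notation Q := (quot_lmod S_scale).
HB.instance Definition _ := GRing.Zmodule.on Q.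

Definition quot_scale (r : R) := lift_op1 Q ( *:%R r).

Lemma pi_scale r : {morph \pi_Q : x / r *: x >-> quot_scale r x}.
Proof.
move=> x; unlock quot_scale; apply/eqP; rewrite piE Quotient.equivE -scalerBr.
by apply: S_scale; rewrite Quotient.idealrBE reprK.
Qed.
Canonical pi_scale_morph r := PiMorph1 (pi_scale r).

Lemma quot_scaleA a b x : quot_scale a (quot_scale b x) = quot_scale (a * b) x.
Proof. by rewrite -[x]reprK !piE scalerA. Qed.

Lemma quot_scale1 : left_id 1 quot_scale.
Proof. by move=> x; rewrite -[x]reprK !piE scale1r. Qed.

Lemma quot_scaleDr : right_distributive quot_scale +%R.
Proof. by move=> a x y; rewrite -[x]reprK -[y]reprK !piE scalerDr. Qed.

Lemma quot_scaleDl x : {morph quot_scale^~ x : a b / a + b}.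
Proof. by move=> a b; rewrite -[x]reprK !piE scalerDl. Qed.

HB.instance Definition _ := GRing.Zmodule_isLmodule.Build R Q
  quot_scaleA quot_scale1 quot_scaleDr quot_scaleDl.

Lemma pi_quot_lmod_lin : lin_map (\pi_Q : V -> Q).
Proof. by move=> r x y; rewrite !piE. Qed.

Lemma pi_quot_lmod_eq0 x : (\pi_Q x = 0) <-> (x \in S).
Proof.
have := Quotient.idealrBE S x 0; rewrite subr0 => ->.
have -> : (0 : Q) = \pi_Q 0 by rewrite piE.
by split=> /eqP.
Qed.

End QuotientModule.

Lemma submod_is_kernel {R : comPzRingType} {V : lmodType R} {P : V -> Prop} :
  P 0 -> (forall r x y, P x -> P y -> P (r *: x + y)) ->
  exists (Q : lmodType R) (p : V -> Q), lin_map p /\ forall x, p x = 0 <-> P x.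
Proof.
move=> P0 P_lin; pose S := [pred x | `[< P x >]].
have S_scale : GRing.scaler_closed S.
  move=> r x /asboolP Px; apply/asboolP.
  by rewrite -[_ *: _]addr0; apply: P_lin.
have S_zmod : GRing.zmod_closed S.
  split=> [|x y /asboolP Px /asboolP Py]; apply/asboolP => //.
  have -> : x - y = 1 *: x + ((-1) *: y + 0) by rewrite scale1r scaleN1r addr0.
  by apply: (P_lin) => //; apply: (P_lin).
pose SZ : zmodClosed V :=
  HB.pack (pred_of_simpl S) (GRing.isZmodClosed.Build V _ S_zmod).
exists (quot_lmod SZ S_scale), \pi; split; first exact: pi_quot_lmod_lin.
by move=> x; rewrite (pi_quot_lmod_eq0 SZ S_scale); split=> /asboolP.
Qed.

Lemma sum_delta_scale {R : pzRingType} {V : lmodType R} m (F : 'I_m -> V) j :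
  \sum_(k < m) ((k == j)%:R : R) *: F k = F j.
Proof.
rewrite (bigD1 j) //= eqxx scale1r big1 ?addr0 // => k /negbTE ->.
exact: scale0r.
Qed.

Lemma bilinear_relation_eq0 {R : comPzRingType} {A B C : lmodType R}
    {f : A -> B -> C} (f_bil : bilinear_map f) {m n : nat} {g : 'I_m -> A}
    (h : 'I_n -> B) {kap : 'I_n -> 'I_m -> R} :
  (forall k, \sum_(j < m) kap k j *: g j = 0) ->
  \sum_(j < m) f (g j) (\sum_(k < n) kap k j *: h k) = 0.
Proof.
move=> rel; under eq_bigr do rewrite (lin_map_sum (f_bil.2 _)).
rewrite exchange_big big1 // => k _ /=.
under eq_bigr do rewrite (lin_mapZ (f_bil.2 _)) -(lin_mapZ (f_bil.1 _)).
by rewrite -(lin_map_sum (f_bil.1 _)) rel (lin_map0 (f_bil.1 _)).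
Qed.

Section TensorProduct.
Context {R : comPzRingType} {A B T : lmodType R} {tens : A -> B -> T}.
Hypothesis tensP : is_tensor_product tens.

Lemma tensor_ind (P : T -> Prop) :
  P 0 -> (forall r x y, P x -> P y -> P (r *: x + y)) ->
  (forall a b, P (tens a b)) -> forall t, P t.
Proof.
(* Uniqueness in the universal property, applied to the zero bilinear map
   into the quotient [T / P]. *)
move=> P0 P_lin Ptens t; have [Q [p [p_lin pP]]] := submod_is_kernel P0 P_lin.
apply/pP.
have zero_bil : bilinear_map (fun (_ : A) (_ : B) => 0 : Q).
  by split=> ? r x y; rewrite scaler0 addr0.
have [p0 [_ p0_uniq]] := tensP.2 Q _ zero_bil.
suff -> : p = fun=> 0 by [].
rewrite -(p0_uniq p); last by split=> // a b; apply/pP.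
by apply: p0_uniq; split=> // r x y; rewrite scaler0 addr0.
Qed.

Context {m : nat} {g : 'I_m -> A}.
Hypothesis g_gen : forall a, exists c : 'I_m -> R, a = \sum_(j < m) c j *: g j.

Lemma tensor_sum_gen t :
  exists b : 'I_m -> B, t = \sum_(j < m) tens (g j) (b j).
Proof.
elim/tensor_ind: t => [|r _ _ [b ->] [b' ->]|a b].
- by exists (fun=> 0); rewrite big1 // => j _; apply: (lin_map0 (tensP.1.2 _)).
- exists (fun j => r *: b j + b' j); rewrite scaler_sumr -big_split.
  by apply: eq_bigr => j _; rewrite (tensP.1.2 _).
- have [c ->] := g_gen a; exists (fun j => c j *: b).
  rewrite (lin_map_sum (tensP.1.1 _)); apply: eq_bigr => j _.
  by rewrite (lin_mapZ (tensP.1.1 _)) (lin_mapZ (tensP.1.2 _)).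
Qed.

Context {n : nat} {h : 'I_n -> B}.
Hypothesis h_gen : forall b, exists c : 'I_n -> R, b = \sum_(k < n) c k *: h k.

Let relation_span (v : {ffun 'I_m -> B}) := exists kap : 'I_n -> 'I_m -> R,
  (forall k, \sum_(j < m) kap k j *: g j = 0) /\
  forall j, v j = \sum_(k < n) kap k j *: h k.

Let relation_span0 : relation_span 0.
Proof.
exists (fun _ _ => 0); split=> [k|j]; rewrite ?ffunE big1 // => *.
all: exact: scale0r.
Qed.

Let relation_span_lin r v w :
  relation_span v -> relation_span w -> relation_span (r *: v + w).
Proof.
move=> [kv [kv_rel kvE]] [kw [kw_rel kwE]].
exists (fun k j => r * kv k j + kw k j); split=> [k|j].
  under eq_bigr do rewrite scalerDl -scalerA.
  by rewrite big_split /= -scaler_sumr kv_rel kw_rel scaler0 addr0.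
rewrite !ffunE kvE kwE scaler_sumr -big_split; apply: eq_bigr => k _.
by rewrite scalerDl scalerA.
Qed.

Let relation_span_scale (d : 'I_m -> R) b :
  \sum_(j < m) d j *: g j = 0 -> relation_span [ffun j => d j *: b].
Proof.
move=> d_rel; have [e ->] := h_gen b.
exists (fun k j => d j * e k); split=> [k|j].
  under eq_bigr do rewrite mulrC -scalerA.
  by rewrite -scaler_sumr d_rel scaler0.
by rewrite ffunE scaler_sumr; apply: eq_bigr => k _; rewrite scalerA.
Qed.

(* [f a y] is the class of [(c_j y)_j] for any coefficients [c] of [a] in
   [g]; it is well defined modulo [relation_span] and bilinear, so it factors
   through [tens], and the factorization maps [sum_j tens (g j) (b j)] to the
   class of [b]. *)
Lemma tensor_sum_gen_eq0 {b : 'I_m -> B} :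
  \sum_(j < m) tens (g j) (b j) = 0 ->
  exists kap : 'I_n -> 'I_m -> R, (forall k, \sum_(j < m) kap k j *: g j = 0) /\
    forall j, b j = \sum_(k < n) kap k j *: h k.
Proof.
move=> b_eq0.
have [Q [p [p_lin pP]]] := submod_is_kernel relation_span0 relation_span_lin.
suff /pP[kap [kap_rel kapE]] : p [ffun j => b j] = 0.
  by exists kap; split=> // j; rewrite -kapE ffunE.
have [c c_gen] := choice g_gen; pose f a y := p [ffun j => c a j *: y].
have fE a y d : a = \sum_(j < m) d j *: g j -> f a y = p [ffun j => d j *: y].
  move=> aE; apply/subr0_eq; rewrite -(lin_mapB p_lin); apply/pP.
  have -> : [ffun j => c a j *: y] - [ffun j => d j *: y] =
            [ffun j => (c a j - d j) *: y].
    by apply/ffunP => j; rewrite !ffunE scalerBl.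
  apply: relation_span_scale; under eq_bigr do rewrite scalerBl.
  by rewrite sumrB -c_gen -aE subrr.
have f_bil : bilinear_map f.
  split=> [y r a a'|a r y y'].
    rewrite (fE _ _ (fun j => r * c a j + c a' j)); last first.
      under eq_bigr do rewrite scalerDl -scalerA.
      by rewrite big_split /= -scaler_sumr -!c_gen.
    rewrite -(lin_mapZ p_lin) -(lin_mapD p_lin); congr p; apply/ffunP => j.
    by rewrite !ffunE scalerDl scalerA.
  rewrite /f -(lin_mapZ p_lin) -(lin_mapD p_lin); congr p; apply/ffunP => j.
  by rewrite !ffunE scalerDr !scalerA mulrC.
have [phi [[phi_lin phiE] _]] := tensP.2 Q f f_bil.
rewrite -(lin_map0 phi_lin) -b_eq0 (lin_map_sum phi_lin).
under eq_bigr => j _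
  do rewrite phiE (fE _ _ (fun k => (k == j)%:R)) ?sum_delta_scale //.
rewrite -(lin_map_sum p_lin); congr p; apply/ffunP => j.
rewrite ffunE sum_ffunE; under eq_bigr do rewrite ffunE eq_sym.
by rewrite sum_delta_scale.
Qed.

End TensorProduct.

Section Ultraproduct.
Context {I : Type} (U : set_system I) {FU : Filter U}.

Lemma filter_dep_choice {X : I -> Type} (x0 : forall i, X i)
    {P : forall i, X i -> Prop} :
  U [set i | exists x, P i x] ->
  exists x : forall i, X i, U [set i | P i (x i)].
Proof.
have xP i : exists x, (exists y, P i y) -> P i x.
  have [[y Py]|noP] := pselect (exists y, P i y); first by exists y.
  by exists (x0 i) => /noP.
have [x xE] := all_sig (fun i => cid (xP i)).
by move=> UP; exists x; apply: filterS UP => i /xE.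
Qed.

Context {R : I -> comPzRingType} {M : forall i, lmodType (R i)}.

Definition rlim (r : forall i, R i) : uring U R :=
  \pi_(uquot U (fun i => R i)) r.

Lemma ulim_eq (x y : forall i, M i) :
  ulim U x = ulim U y <-> U [set i | x i = y i].
Proof. exact: uquotE. Qed.

Lemma ulim_repr (X : umod U M) : ulim U (repr X) = X.
Proof. exact: reprK. Qed.

Lemma ulim0 : ulim U (fun i => 0 : M i) = 0.
Proof. by []. Qed.

Lemma ulimZ r (x : forall i, M i) :
  rlim r *: ulim U x = ulim U (fun i => r i *: x i).
Proof. exact: uscale_pi. Qed.

Lemma ulim_sum m (x : 'I_m -> forall i, M i) :
  \sum_(j < m) ulim U (x j) = ulim U (fun i => \sum_(j < m) x j i).
Proof.
elim: m x => [|m IHm] x.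
  rewrite big_ord0 -ulim0; congr (ulim U _).
  by apply: functional_extensionality_dep => i; rewrite big_ord0.
rewrite big_ord_recr /= IHm [_ + _]uadd_pi; congr (ulim U _).
by apply: functional_extensionality_dep => i; rewrite big_ord_recr.
Qed.

Lemma ulim_gen {m} {g : forall i, 'I_m -> M i} :
  (forall i (x : M i), exists c : 'I_m -> R i, x = \sum_(j < m) c j *: g i j) ->
  forall X : umod U M, exists c : 'I_m -> uring U R,
    X = \sum_(j < m) c j *: ulim U (fun i => g i j).
Proof.
move=> g_gen X; have [c cE] := all_sig (fun i => cid (g_gen i (repr X i))).
exists (fun j => rlim (fun i => c i j)); under eq_bigr do rewrite ulimZ.
rewrite ulim_sum -{1}(ulim_repr X); congr (ulim U _).
exact: functional_extensionality_dep cE.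
Qed.

End Ultraproduct.

Section NaturalMap.
Context {I : Type} (U : set_system I) {FU : Filter U}.
Context {R : I -> comPzRingType} {A B T : forall i, lmodType (R i)}
  {tens : forall i, A i -> B i -> T i}.
Hypothesis tensP : forall i, is_tensor_product (tens i).
Context {m n : nat} {gA : forall i, 'I_m -> A i} {gB : forall i, 'I_n -> B i}.
Hypothesis gA_gen :
  forall i (a : A i), exists c : 'I_m -> R i, a = \sum_(j < m) c j *: gA i j.
Hypothesis gB_gen :
  forall i (b : B i), exists c : 'I_n -> R i, b = \sum_(k < n) c k *: gB i k.
Context {TU : lmodType (uring U R)} {tensU : umod U A -> umod U B -> TU}.
Hypothesis tensUP : is_tensor_product tensU.
Context {Fm : TU -> umod U T}.
Hypothesis Fm_lin : lin_map Fm.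
Hypothesis FmE : forall (a : forall i, A i) (b : forall i, B i),
  Fm (tensU (ulim U a) (ulim U b)) = ulim U (fun i => tens i (a i) (b i)).

Let Fm_sum (b : 'I_m -> forall i, B i) :
  Fm (\sum_(j < m) tensU (ulim U (gA^~ j)) (ulim U (b j))) =
  ulim U (fun i => \sum_(j < m) tens i (gA i j) (b j i)).
Proof.
by rewrite (lin_map_sum Fm_lin); under eq_bigr do rewrite FmE; rewrite ulim_sum.
Qed.

Lemma natural_map_surj y : exists x, Fm x = y.
Proof.
have [b bE] := filter_dep_choice U (fun i (_ : 'I_m) => 0 : B i)
  (P := fun i b => repr y i = \sum_(j < m) tens i (gA i j) (b j))
  (filterS (fun i _ => tensor_sum_gen (tensP i) (gA_gen i) (repr y i)) filterT).
exists (\sum_(j < m) tensU (ulim U (gA^~ j)) (ulim U (fun i => b i j))).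
by rewrite Fm_sum -[RHS]ulim_repr; apply/ulim_eq; apply: filterS bE.
Qed.

Lemma natural_map_eq0 tau : Fm tau = 0 -> tau = 0.
Proof.
have [beta ->] := tensor_sum_gen tensUP (ulim_gen U gA_gen) tau.
have -> : beta = fun j => ulim U (repr (beta j)).
  by apply: functional_extensionality_dep => j; rewrite ulim_repr.
rewrite Fm_sum -ulim0 => /ulim_eq U_eq0.
have [kap kapP] := filter_dep_choice U (fun i k j => 0)
  (P := fun i kap => (forall k, \sum_(j < m) kap k j *: gA i j = 0) /\
     forall j, repr (beta j) i = \sum_(k < n) kap k j *: gB i k)
  (filterS (fun i => tensor_sum_gen_eq0 (tensP i) (gA_gen i) (gB_gen i)) U_eq0).
have kap_rel k :
    \sum_(j < m) rlim U (fun i => kap i k j) *: ulim U (gA^~ j) = 0.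
  under eq_bigr do rewrite ulimZ; rewrite ulim_sum -ulim0.
  by apply/ulim_eq; apply: filterS kapP => i [+ _]; apply.
have betaE j : ulim U (repr (beta j)) =
    \sum_(k < n) rlim U (fun i => kap i k j) *: ulim U (gB^~ k).
  under eq_bigr do rewrite ulimZ; rewrite ulim_sum.
  by apply/ulim_eq; apply: filterS kapP => i [_ +]; apply.
under eq_bigr do rewrite betaE.
exact (bilinear_relation_eq0 tensUP.1 _ kap_rel).
Qed.

End NaturalMap.

Theorem lemma2p9 (I : Type) (U : set_system I) (HU : UltraFilter U)
  (R : I -> comPzRingType) (A B T : forall i, lmodType (R i))
  (tens : forall i, A i -> B i -> T i) :
  ~ finite_set [set: I] ->
  unif_fin_gen A -> unif_fin_gen B ->
  (forall i, is_tensor_product (tens i)) ->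
  forall (TU : lmodType (uring U R)) (tensU : umod U A -> umod U B -> TU),
    is_tensor_product tensU ->
  forall Fm : TU -> umod U T,
    lin_map Fm ->
    (forall (a : forall i, A i) (b : forall i, B i),
        Fm (tensU (ulim U a) (ulim U b)) = ulim U (fun i => tens i (a i) (b i))) ->
    bijective Fm.
Proof.
move=> _ [m A_gen] [n B_gen] tensP TU tensU tensUP Fm Fm_lin FmE.
have [gA gA_gen] := all_sig (fun i => cid (A_gen i)).
have [gB gB_gen] := all_sig (fun i => cid (B_gen i)).
have Fm_inj := lin_map_inj Fm_lin
  (natural_map_eq0 U tensP gA_gen gB_gen tensUP Fm_lin FmE).
have [Fm_inv Fm_invK] := choice (natural_map_surj U tensP gA_gen Fm_lin FmE).
by exists Fm_inv => // x; apply: Fm_inj; rewrite Fm_invK.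
Qed.
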